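(* Let $p\equiv1\pmod 4$ be a prime. Let $S\subset\mathbb{P}^5$ be the surface over $\mathbb{F}_p$ defined by $$x_1^2-x_2^2=x_3^2,\qquad x_0^2-x_1^2=x_4^2,\qquad x_0^2-x_2^2=x_5^2,$$ and let $X\subset\mathbb{A}^3$ be the affine surface over $\mathbb{F}_p$ given by $z^2=(x^2y^2+1)(x^2+y^2)$. Then $S$ is birationally isomorphic to $X$ over $\mathbb{F}_p$. Moreover, there is an isomorphism (of varieties over $\mathbb{F}_p$) between $S\setminus D$ and $X\setminus D_1$, where $D=S\cap\{x_1x_5=0\}$ and $D_1=X\cap\{xyz=0\}$. *)

From HB Require Import structures.
From mathcomp Require Import all_boot all_order all_algebra.
From mathcomp Require Import mpoly.
Set Implicit Arguments. Unset Strict Implicit. Unset Printing Implicit Defensive.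
Import Order.TTheory GRing.Theory.
Local Open Scope ring_scope.

(* Evaluation of an integer-coefficient polynomial in n variables at a point
   of K^n (coefficients sent to K through the canonical map int -> K; for K
   of characteristic p this is the same as reducing coefficients mod p, so
   these are exactly the polynomials with coefficients in F_p). *)
Definition evZ (K : nzRingType) (n : nat) (P : {mpoly int[n]}) (v : 'I_n -> K) : K :=
  mmap (fun c : int => c%:~R) v P.

Definition onXD1 (K : fieldType) (w : 'I_3 -> K) : bool :=
  let x := w (inord 0) in let y := w (inord 1) in let z := w (inord 2) in
  (z ^+ 2 == (x ^+ 2 * y ^+ 2 + 1) * (x ^+ 2 + y ^+ 2)) && (x * y * z != 0).

(* Representatives in K^6 of K-points of S \ D, S ⊂ P^5 given by
   x1^2 - x2^2 = x3^2, x0^2 - x1^2 = x4^2, x0^2 - x2^2 = x5^2,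
   D = S ∩ {x1 x5 = 0}; coordinates x_i = v i.  (x1 x5 != 0 forces v != 0.) *)
Definition onSD (K : fieldType) (v : 'I_6 -> K) : bool :=
  let x0 := v (inord 0) in let x1 := v (inord 1) in let x2 := v (inord 2) in
  let x3 := v (inord 3) in let x4 := v (inord 4) in let x5 := v (inord 5) in
  [&& x1 ^+ 2 - x2 ^+ 2 == x3 ^+ 2, x0 ^+ 2 - x1 ^+ 2 == x4 ^+ 2,
      x0 ^+ 2 - x2 ^+ 2 == x5 ^+ 2 & x1 * x5 != 0].

Definition psiMap (K : fieldType) (P : 'I_6 -> {mpoly int[3]}) (w : 'I_3 -> K)
  : 'I_6 -> K := fun i => evZ (P i) w.

Definition phiMap (K : fieldType) (Q : 'I_3 -> {mpoly int[6]}) (a b : nat)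
  (v : 'I_6 -> K) : 'I_3 -> K :=
  fun j => evZ (Q j) v / (v (inord 1) ^+ a * v (inord 5) ^+ b).

Definition scalev (K : fieldType) (n : nat) (c : K) (v : 'I_n -> K) : 'I_n -> K :=
  fun i => c * v i.

From HB Require Import structures.
From mathcomp Require Import all_boot all_order all_algebra.
From mathcomp Require Import mpoly.
From mathcomp Require Import ring zify.
From Stdlib Require Import FunctionalExtensionality.
Set Implicit Arguments. Unset Strict Implicit. Unset Printing Implicit Defensive.
Import Order.TTheory GRing.Theory.
Local Open Scope ring_scope.

(* Fix i with i^2 = -1; for p = 4k + 1 Wilson's theorem gives i = (2k)!.  The map
   psi (x, y, z) = [y(x^2+1) : 2xy : i x(y^2-1) : x(y^2+1) : y(x^2-1) : z]
   satisfies the first two quadrics of S identically, and the third exactly when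
   z^2 = (x^2 y^2 + 1)(x^2 + y^2).  Conversely the quadrics factor as
   x1^2 = (x0 + x4)(x0 - x4) = (x3 - i x2)(x3 + i x2), so a point of S \ D is
   determined up to scaling by x1, x5, A = x0 + x4 and B = x3 - i x2; this yields
   the inverse phi [x0 : ... : x5] = (A / x1, B / x1, 2 x5 A B / x1^3). *)

Lemma eq_fun_inord (T : Type) (n : nat) (f g : 'I_n.+1 -> T) :
  (forall j, (j < n.+1)%N -> f (inord j) = g (inord j)) -> f = g.
Proof.
by move=> fg; apply: functional_extensionality => j; rewrite -(inord_val j) fg.
Qed.

(* Each factor m + l + 1 of (m + j)! / m! equals -(m - l) modulo 2m + 1. *)
Lemma natr_factD_mirror (R : pzRingType) (m j : nat) :
  (j <= m)%N -> (2 * m + 1)%:R = 0 :> R ->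
  ((m + j)`!)%:R = (-1) ^+ j * (m`!)%:R * (m ^_ j)%:R :> R.
Proof.
move=> + char0; elim: j => [|j IHj] lejm; first by rewrite addn0 ffactn0 mulr1 mul1r.
have opp_succ : ((m + j).+1)%:R = - (m - j)%:R :> R.
  apply/eqP; rewrite -subr_eq0 opprK -natrD -char0; apply/eqP; congr _%:R; lia.
rewrite addnS factS natrM opp_succ IHj 1?ltnW // ffactnSr natrM exprS.
by rewrite mulN1r !mulNr -(commr_nat _ (m - j)) !mulrA.
Qed.

Lemma sqr_natr_fact_half (R : nzRingType) (k : nat) :
  (4 * k + 1)%N \in [pchar R] -> ((2 * k)`!%:R : R) ^+ 2 = -1.
Proof.
move=> charR; have p_prime := pcharf_prime charR.
have /esym := Wilson (prime_gt1 p_prime); rewrite p_prime (dvdn_pcharf charR).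
have -> : (4 * k + 1).-1 = (2 * k + 2 * k)%N by lia.
rewrite -addn1 natrD addr_eq0 => /eqP.
rewrite natr_factD_mirror ?mulnA ?(pcharf0 charR) //.
by rewrite ffactnn exprM sqrrN !expr1n mul1r -expr2.
Qed.

Section Formulas.
Variables (R : comPzRingType) (i : R).

Definition psi (w : 'I_3 -> R) : 'I_6 -> R :=
  let x := w (inord 0) in let y := w (inord 1) in let z := w (inord 2) in
  fun j => [:: y * (x ^+ 2 + 1); 2 * x * y; i * (x * (y ^+ 2 - 1));
               x * (y ^+ 2 + 1); y * (x ^+ 2 - 1); z]`_j.

Definition phi_num (v : 'I_6 -> R) : 'I_3 -> R :=
  let A := v (inord 0) + v (inord 4) in let B := v (inord 3) - i * v (inord 2) in
  fun j => [:: A * v (inord 1) ^+ 2; B * v (inord 1) ^+ 2;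
               2 * v (inord 5) * A * B]`_j.

End Formulas.

Section FormulasMorphism.
Variables (R S : comPzRingType) (f : {rmorphism R -> S}) (i : R).

Lemma rmorph_psi w w' j :
  (forall t, f (w t) = w' t) -> f (psi i w j) = psi (f i) w' j.
Proof.
move=> fw; rewrite /psi; case: j => [[|[|[|[|[|[|j]]]]]] hj] //=;
  by rewrite ?(rmorphM, rmorphD, rmorphN, rmorphXn, rmorph_nat, rmorph1, fw).
Qed.

Lemma rmorph_phi_num v v' j :
  (forall t, f (v t) = v' t) -> f (phi_num i v j) = phi_num (f i) v' j.
Proof.
move=> fv; rewrite /phi_num; case: j => [[|[|[|j]]] hj] //=;
  by rewrite ?(rmorphM, rmorphD, rmorphN, rmorphXn, rmorph_nat, fv).
Qed.

End FormulasMorphism.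

Definition psi_poly (i : int) : 'I_6 -> {mpoly int[3]} := psi i%:MP (fun t => 'X_t).
Definition phi_poly (i : int) : 'I_3 -> {mpoly int[6]} := phi_num i%:MP (fun t => 'X_t).

Definition phi (K : fieldType) (i : K) (v : 'I_6 -> K) : 'I_3 -> K :=
  fun j => phi_num i v j / v (inord 1) ^+ 3.

Lemma mmapXU (R S : nzRingType) (f : {rmorphism R -> S}) n (h : 'I_n -> S) t :
  mmap f h 'X_t = h t.
Proof. by rewrite mmapX mmap1U. Qed.

Section EvalPoly.
Variables (K : fieldType) (i : int).
Let toK : {rmorphism int -> K} := intmul 1.

Lemma psiMap_poly : psiMap (psi_poly i) = psi (i%:~R : K).
Proof.
apply: functional_extensionality => w; apply: functional_extensionality => j.
by rewrite /psiMap /evZ (rmorph_psi _ _ (mmapXU toK w)) /= mmapC.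
Qed.

Lemma phiMap_poly : phiMap (phi_poly i) 3 0 = phi (i%:~R : K).
Proof.
apply: functional_extensionality => v; apply: functional_extensionality => j.
rewrite /phiMap /phi expr0 mulr1 /evZ.
by rewrite (rmorph_phi_num _ _ (mmapXU toK v)) /= mmapC.
Qed.

End EvalPoly.

Lemma onSD_scalev (K : fieldType) (c : K) v : c != 0 -> onSD (scalev c v) = onSD v.
Proof.
move=> c0; have c2 : c ^+ 2 != 0 by rewrite expf_neq0.
rewrite /onSD /scalev !exprMn -!mulrBr !(inj_eq (mulfI c2)).
by rewrite mulrACA mulf_eq0 negb_or mulf_neq0.
Qed.

Lemma phi_scalev (K : fieldType) (i c : K) v : c != 0 -> phi i (scalev c v) = phi i v.
Proof.
move=> c0; apply: functional_extensionality => j; rewrite /phi.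
have -> : phi_num i (scalev c v) j = c ^+ 3 * phi_num i v j.
  by rewrite /phi_num /scalev; case: j => [[|[|[|j]]] hj] //=; ring.
by rewrite /scalev exprMn (invfM (c ^+ 3)) mulrACA divff ?mul1r // expf_neq0.
Qed.

Section ExplicitMaps.
Variables (K : fieldType) (i : K).
Hypotheses (sqr_i : i ^+ 2 = -1) (two_neq0 : 2 != 0 :> K).

Lemma mulr_ii (a : K) : i * (i * a) = - a.
Proof. by rewrite mulrA -expr2 sqr_i mulN1r. Qed.

Lemma onSD_psi w : onSD (psi i w) = onXD1 w.
Proof.
rewrite /onSD /onXD1 /psi !inordK //=.
set x := w (inord 0); set y := w (inord 1); set z := w (inord 2).
have sqr_i_mul a : (i * a) ^+ 2 = - a ^+ 2 by rewrite exprMn sqr_i mulN1r.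
rewrite sqr_i_mul.
have -> : (2 * x * y) ^+ 2 - - (x * (y ^+ 2 - 1)) ^+ 2 == (x * (y ^+ 2 + 1)) ^+ 2.
  by apply/eqP; ring.
have -> : (y * (x ^+ 2 + 1)) ^+ 2 - (2 * x * y) ^+ 2 == (y * (x ^+ 2 - 1)) ^+ 2.
  by apply/eqP; ring.
have -> : (y * (x ^+ 2 + 1)) ^+ 2 - - (x * (y ^+ 2 - 1)) ^+ 2 == z ^+ 2 =
          (z ^+ 2 == (x ^+ 2 * y ^+ 2 + 1) * (x ^+ 2 + y ^+ 2)).
  by rewrite eq_sym; congr (_ == _); ring.
by rewrite -!mulrA mulf_eq0 (negbTE two_neq0).
Qed.

Lemma phi_psi w : onXD1 w -> phi i (psi i w) = w.
Proof.
case/andP=> _; rewrite !mulf_eq0 !negb_or => /andP[/andP[x0 y0] _].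
apply: eq_fun_inord => -[|[|[|j]]] // _;
  rewrite /phi /phi_num /psi !inordK //= ?mulr_ii; field; by rewrite ?x0 ?y0 ?two_neq0.
Qed.

Lemma onSD_conics v : onSD v ->
  [/\ (v (inord 0) + v (inord 4)) * (v (inord 0) - v (inord 4)) = v (inord 1) ^+ 2,
      (v (inord 3) - i * v (inord 2)) * (v (inord 3) + i * v (inord 2)) = v (inord 1) ^+ 2
    & v (inord 1) != 0].
Proof.
case/and4P=> /eqP e1 /eqP e2 _; rewrite mulf_eq0 negb_or => /andP[t0 _].
split=> //.
- by transitivity (v (inord 0) ^+ 2 - v (inord 4) ^+ 2); [ring | rewrite -e2; ring].
- transitivity (v (inord 3) ^+ 2 - i ^+ 2 * v (inord 2) ^+ 2); first ring.
  by rewrite sqr_i -e1; ring.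
Qed.

Lemma psi_phi v : onSD v -> exists2 c, c != 0 & psi i (phi i v) = scalev c v.
Proof.
move=> /onSD_conics[fA fB t0].
set t := v (inord 1) in fA fB t0 *.
set A := v (inord 0) + v (inord 4) in fA.
set B := v (inord 3) - i * v (inord 2) in fB.
have t2 : t ^+ 2 != 0 by rewrite expf_neq0.
have A0 : A != 0 by apply: contraNneq t2 => A0; rewrite -fA A0 mul0r.
have B0 : B != 0 by apply: contraNneq t2 => B0; rewrite -fB B0 mul0r.
have e0 : v (inord 0) = (A + t ^+ 2 / A) / 2.
  by rewrite -fA /A; field; rewrite two_neq0 A0.
have e4 : v (inord 4) = (A - t ^+ 2 / A) / 2.
  by rewrite -fA /A; field; rewrite two_neq0 A0.
have e3 : v (inord 3) = (B + t ^+ 2 / B) / 2.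
  by rewrite -fB /B; field; rewrite two_neq0 B0.
have e2 : v (inord 2) = i * (B - t ^+ 2 / B) / 2.
  transitivity (- i ^+ 2 * v (inord 2)); first by rewrite sqr_i opprK mul1r.
  by rewrite -fB /B; field; rewrite two_neq0 B0.
exists (2 * A * B / t ^+ 3); first by rewrite !mulf_neq0 ?invr_neq0 ?expf_neq0.
rewrite /phi /phi_num -/t -/A -/B; clearbody A B.
apply: eq_fun_inord => -[|[|[|[|[|[|j]]]]]] // _;
  rewrite /psi /scalev !inordK //= ?e0 ?e2 ?e3 ?e4 -/t;
  field; by rewrite ?two_neq0 ?A0 ?B0 ?t0.
Qed.

Lemma phi_onXD1 v : onSD v -> onXD1 (phi i v).
Proof.
move=> hv; have [c c0 e] := psi_phi hv.
by rewrite -onSD_psi e onSD_scalev.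
Qed.

End ExplicitMaps.

Theorem lemma4p3 (p : nat) (hp : prime p) (hp4 : (p %% 4 = 1)%N) :
  exists (P : 'I_6 -> {mpoly int[3]}) (Q : 'I_3 -> {mpoly int[6]}) (a b : nat),
  forall (K : fieldType), p \in [pchar K] ->
    (forall w : 'I_3 -> K, onXD1 w ->
        onSD (psiMap P w) /\ phiMap Q a b (psiMap P w) = w) /\
    (forall v : 'I_6 -> K, onSD v ->
        [/\ onXD1 (phiMap Q a b v),
            (forall c : K, c != 0 -> phiMap Q a b (scalev c v) = phiMap Q a b v)
          & exists2 c : K, c != 0 & psiMap P (phiMap Q a b v) = scalev c v]).
Proof.
have [k p_eq] : exists k, p = (4 * k + 1)%N.
  by exists (p %/ 4)%N; rewrite {1}(divn_eq p 4) hp4 mulnC.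
exists (psi_poly (2 * k)`!), (phi_poly (2 * k)`!), 3%N, 0%N => K charK.
rewrite psiMap_poly phiMap_poly; set i : K := _%:~R.
have sqr_i : i ^+ 2 = -1 by apply: sqr_natr_fact_half; rewrite -p_eq.
have two_neq0 : 2 != 0 :> K.
  by rewrite -(dvdn_pcharf charK 2) dvdn_prime2 //; apply/eqP => p2; move: hp4; rewrite p2.
split=> [w onX | v onS]; first by rewrite onSD_psi ?phi_psi.
split; [exact: phi_onXD1 | move=> c; exact: phi_scalev | exact: psi_phi].
Qed.
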